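(* Let $G=(V,E)$ be an $n$-vertex graph and $\pi\colon[n]\to V$ a fixed bijection. If the longest dependency path with respect to $\pi$ has length $2l+1$ (with $l\ge 0$), then the parallel greedy MIS algorithm run on $G$ with the order $\pi$ terminates within at most $l+1$ rounds.
   Context: Parallel greedy MIS with a fixed order $\pi\colon[n]\to V$ (a bijection; $\pi(i)$ is the vertex at position $i$): in each round, every remaining vertex whose position is smaller than the positions of all its remaining neighbors is added to the independent set, and these vertices together with all their neighbors are removed; rounds are counted until no vertex remains. Let $V^*\subseteq V$ be the MIS produced by the sequential greedy algorithm that processes $\pi(1),\dots,\pi(n)$ in this order and adds a vertex iff none of its neighbors was added before. For $v\notin V^*$, its inhibitor $\mathrm{inhib}(v)$ is the neighbor of $v$ in $V^*$ with minimum position. A sequence of positions $1\le p_1<\dots<p_{2l+1}\le n$ ($l\ge 0$) forms a dependency path of length $2l+1$ (with respect to $\pi$) if (i) $(\pi(p_1),\dots,\pi(p_{2l+1}))$ is a path in $G$; (ii) $\pi(p_k)\in V^*$ for all odd $k$; (iii) $\pi(p_k)\notin V^*$ for all even $k$; (iv) $\pi(p_{k-1})=\mathrm{inhib}(\pi(p_k))$ for all even $k$. The dependency length is the maximum length of a dependency path. *)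

From mathcomp Require Import all_boot.
Set Implicit Arguments. Unset Strict Implicit. Unset Printing Implicit Defensive.

Section MIS.
Variables (T : finType) (e : rel T) (pi : 'I_#|T| -> T).

Definition order_seq : seq T := [seq pi i | i <- enum 'I_#|T|].

Definition pos (v : T) : nat := index v order_seq.

Fixpoint greedy_aux (s : seq T) (I : {set T}) : {set T} :=
  match s with
  | [::] => I
  | v :: s' => greedy_aux s' (if [exists u in I, e u v] then I else v |: I)
  end.

Definition Vstar : {set T} := greedy_aux order_seq set0.

Definition is_inhib (u v : T) : bool :=
  [&& v \notin Vstar, u \in Vstar, e u v &
      [forall w, (w \in Vstar) && e w v ==> (pos u <= pos w)]].

(* Dependency path given by positions p_1 < ... < p_{2l+1}
   (0-based list index k corresponds to p_{k+1}; so "k odd" in the paper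
   is "k even" here).  The default element of nth is irrelevant since only
   indices k < size p are used. *)
Definition dep_path (p : seq 'I_#|T|) : bool :=
  match p with
  | [::] => false
  | q :: p' =>
    let vs := map pi p in
    [&& odd (size p),
        sorted ltn (map val p),
        path e (pi q) (map pi p'),
        all (fun k => (nth (pi q) vs k \in Vstar) == ~~ odd k) (iota 0 (size p)) &
        all (fun k => odd k ==> is_inhib (nth (pi q) vs k.-1) (nth (pi q) vs k))
            (iota 0 (size p))]
  end.

Definition selected (R : {set T}) : {set T} :=
  [set v in R | [forall u in R, e v u ==> (pos v < pos u)]].

Definition par_round (R : {set T}) : {set T} :=
  [set v in R | (v \notin selected R) && ~~ [exists u in selected R, e u v]].

End MIS.

(* Call a set R of remaining vertices closed if every removed vertex of V*
   has all its neighbours removed.  The whole vertex set is closed and a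
   round preserves closedness; in a closed set every selected vertex lies in
   V*, since a neighbour in V* of smaller position can neither be present
   (the vertex would not be selected) nor removed (closedness).  Now let v in V*
   survive r+1 rounds.  It was not selected in round r+1, so it has a present
   neighbour u of smaller position; u is not in V*, and its inhibitor w has
   smaller position still and, by closedness, survived r rounds.  Appending
   u, v to a dependency path of length 2r+1 ending at w gives one of length
   2r+3 ending at v.  Hence after l+1 rounds no vertex of V* remains, and then
   neither does any other vertex, whose inhibitor would survive as well. *)
From Pilot Require Import Defs.
From mathcomp Require Import all_boot zify.
Set Implicit Arguments. Unset Strict Implicit.

Lemma all_iota0P (P : pred nat) n : reflect (forall k, k < n -> P k) (all P (iota 0 n)).
Proof.
apply: (iffP allP) => [H k kn | H k]; last by rewrite mem_iota => /H.
by apply: H; rewrite mem_iota.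
Qed.

Lemma mem_greedy_aux (T : finType) (e : rel T) (s : seq T) (I : {set T}) (x : T) :
  uniq s ->
  (x \in greedy_aux e s I) = (x \in I) || ((x \in s) &&
     [forall u, e u x ==> ~~ ((u \in I) || ((u \in greedy_aux e s I) && (index u s < index x s)))]).
Proof.
elim: s I x => [|v s IH] I x /=; first by rewrite orbF.
case/andP => vNs s_uniq.
set I' := (if _ then _ else _).
have inI' y : y \in I' = (y \in I) || ((y == v) && ~~ [exists u in I, e u v]).
  rewrite /I'; case: ifP => _; first by rewrite andbF orbF.
  by rewrite inE in_set1 andbT orbC.
have greedy_notin y : y \notin s -> (y \in greedy_aux e s I') = (y \in I').
  by move=> yNs; rewrite IH // (negbTE yNs) orbF.
rewrite in_cons; case: (eqVneq x v) => [-> | xv] /=.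
  rewrite greedy_notin // inI' eqxx /=; congr (_ || _).
  rewrite negb_exists; apply: eq_forallb => u.
  by rewrite ltn0 andbF orbF; case: (u \in I); case: (e u v).
case xs: (x \in s); last by rewrite greedy_notin ?xs // inI' (negbTE xv).
rewrite IH // xs /= inI' (negbTE xv) /= orbF; congr (_ || _).
apply: eq_forallb => u; congr (_ ==> ~~ _).
rewrite inI' (eq_sym v u); case: (eqVneq u v) => [-> | uv] /=; last by rewrite orbF ltnS.
have -> : index v s < index x s = false.
  by apply/negbTE; rewrite -leqNgt (memNindex vNs) index_size.
rewrite greedy_notin // andbF orbF inI' eqxx /= andbT.
by case: (v \in I); case: [exists u in I, e u v].
Qed.

Section ParallelGreedy.
Variables (T : finType) (e : rel T) (pi : 'I_#|T| -> T) (g : T -> 'I_#|T|).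
Hypotheses (e_sym : symmetric e) (e_irr : irreflexive e)
  (pi_can : cancel pi g) (g_can : cancel g pi).

Local Notation V := (Vstar e pi).
Local Notation pos := (pos pi).
Local Notation round := (par_round e pi).

Lemma order_seq_uniq : uniq (order_seq pi).
Proof. by rewrite map_inj_uniq ?enum_uniq //; apply: can_inj pi_can. Qed.

Lemma mem_order_seq x : x \in order_seq pi.
Proof. by rewrite -[x]g_can map_f ?mem_enum. Qed.

Lemma pos_pi i : pos (pi i) = i.
Proof. by rewrite /Defs.pos index_map ?index_enum_ord //; apply: can_inj pi_can. Qed.

Lemma pos_inj : injective pos.
Proof. by move=> u v; rewrite -[u]g_can -[v]g_can !pos_pi => /val_inj ->. Qed.

Lemma in_Vstar x : x \in V = [forall u, e u x ==> ~~ ((u \in V) && (pos u < pos x))].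
Proof.
rewrite {1}/Vstar mem_greedy_aux ?order_seq_uniq // mem_order_seq inE /=.
by apply: eq_forallb => u; rewrite inE.
Qed.

Lemma Vstar_indep u v : u \in V -> v \in V -> ~~ e u v.
Proof.
move=> uV vV; apply/negP => euv.
case: (ltngtP (pos u) (pos v)) => [lt_uv | lt_vu | /pos_inj eq_uv].
- by move: vV; rewrite in_Vstar => /forallP/(_ u); rewrite euv uV lt_uv.
- by move: uV; rewrite in_Vstar => /forallP/(_ v); rewrite e_sym euv vV lt_vu.
- by move: euv; rewrite eq_uv e_irr.
Qed.

Lemma exists_inhib u : u \notin V -> exists2 w, is_inhib e pi w u & pos w < pos u.
Proof.
move=> uN; move: (uN); rewrite in_Vstar negb_forall => /existsP [w0].
rewrite negb_imply negbK => /andP [ew0u /andP [w0V w0u]].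
pose P := [pred w | (w \in V) && e w u].
have Pw0 : P w0 by rewrite inE /= w0V ew0u.
have [w /andP [wV ewu] min_w] := arg_minnP pos Pw0.
exists w; last exact: leq_ltn_trans (min_w _ Pw0) w0u.
by rewrite /is_inhib uN wV ewu; apply/forallP => w'; apply/implyP; apply: min_w.
Qed.

Definition removal_closed (R : {set T}) :=
  forall y, y \in V -> y \notin R -> forall z, e y z -> z \notin R.

Lemma selected_Vstar R x : removal_closed R -> x \in selected e pi R -> x \in V.
Proof.
move=> closedR; rewrite inE => /andP [xR /forallP x_min].
rewrite in_Vstar; apply/forallP => u; apply/implyP => eux.
apply/negP => /andP [uV ux].
case uR: (u \in R).
- by move: (x_min u); rewrite uR e_sym eux /= ltnNge ltnW.
- by have := closedR u uV (negbT uR) x eux; rewrite xR.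
Qed.

Lemma round_closed R : removal_closed R -> removal_closed (round R).
Proof.
move=> closedR y yV yN z eyz; apply/negP; rewrite inE => /andP [zR /andP [zNsel zNadj]].
case yR: (y \in R); last by have := closedR y yV (negbT yR) z eyz; rewrite zR.
move: yN; rewrite inE yR /= negb_and !negbK => /orP [ysel | /existsP [x /andP [xsel exy]]].
- by apply: (negP zNadj); apply/existsP; exists y; rewrite ysel eyz.
- by move: exy; apply/negP; apply: Vstar_indep (selected_Vstar closedR xsel) yV.
Qed.

Lemma iter_round_closed r : removal_closed (iter r round setT).
Proof.
elim: r => [|r IH] /=; first by move=> y _; rewrite inE.
exact: round_closed.
Qed.

Lemma dep_path1 v : v \in V -> dep_path e pi [:: g v].
Proof. by move=> vV; rewrite /dep_path /= g_can vV. Qed.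

Lemma dep_path_cat2 x0 L0 b c :
  dep_path e pi (x0 :: L0) -> is_inhib e pi (pi (last x0 L0)) (pi b) ->
  e (pi b) (pi c) -> val (last x0 L0) < val b < val c -> pi c \in V ->
  dep_path e pi (x0 :: L0 ++ [:: b; c]).
Proof.
rewrite /dep_path => /and5P [odd_L sorted_L path_L parity_L inhib_L] inh_b ebc.
case/andP => lt_ab lt_bc cV; have /and4P [bN _ eab _] := inh_b.
rewrite -cat_cons; set L := x0 :: L0 in odd_L sorted_L parity_L inhib_L *.
set vs := map pi (L ++ [:: b; c]).
have nthL k : k < size L -> nth (pi x0) vs k = nth (pi x0) (map pi L) k.
  by move=> kL; rewrite /vs map_cat nth_cat size_map kL.
have nth_b : nth (pi x0) vs (size L) = pi b.
  by rewrite /vs map_cat nth_cat size_map ltnn subnn.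
have nth_c : nth (pi x0) vs (size L).+1 = pi c.
  by rewrite /vs map_cat nth_cat size_map ltnNge leqnSn subSnn.
have index_cases k : k < size (L ++ [:: b; c]) -> [\/ k = size L, k = (size L).+1 | k < size L].
  rewrite size_cat addn2 ltnS leq_eqVlt ltnS leq_eqVlt.
  by case/orP => [/eqP -> | /orP [/eqP -> | kL]]; [apply: Or32 | apply: Or31 | apply: Or33].
apply/and5P; split.
- by rewrite size_cat addn2 /= negbK.
- by move: sorted_L; rewrite /L /= map_cat cat_path => ->; rewrite /= last_map lt_ab lt_bc.
- by rewrite map_cat cat_path path_L /= last_map eab ebc.
- apply/all_iota0P => k /index_cases [-> | -> | kL]; rewrite ?nth_b ?nth_c.
  + by rewrite (negbTE bN) odd_L.
  + by rewrite cV oddS odd_L.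
  + by rewrite nthL //; apply: (all_iota0P _ _ parity_L).
- apply/all_iota0P => k /index_cases [-> | -> | kL].
  + rewrite nth_b nthL ?ltn_predL // -(size_map pi L) nth_last last_map.
    by apply/implyP => _; apply: inh_b.
  + by rewrite oddS odd_L implyFb.
  + have kL' : k.-1 < size L by apply: leq_ltn_trans (leq_pred k) kL.
    rewrite (nthL _ kL) (nthL _ kL').
    exact: (all_iota0P _ _ inhib_L).
Qed.

Lemma surviving_Vstar_dep_path r v : v \in V -> v \in iter r round setT ->
  exists x0 L0, [/\ dep_path e pi (x0 :: L0), size L0 = r.*2 & pi (last x0 L0) = v].
Proof.
elim: r v => [|r IH] v vV.
  by move=> _; exists (g v), [::]; rewrite g_can dep_path1.
set R := iter r round setT.
rewrite iterS -/R inE => /andP [vR /andP [vNsel _]].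
rewrite inE vR negb_forall in vNsel.
have /existsP [u] := vNsel; rewrite negb_imply negb_imply -leqNgt => /and3P [uR evu le_uv].
have lt_uv : pos u < pos v.
  rewrite ltn_neqAle le_uv andbT; apply/eqP => /pos_inj eq_uv.
  by move: evu; rewrite eq_uv e_irr.
have uN : u \notin V by apply/negP => uV; move: evu; rewrite e_sym (negbTE (Vstar_indep uV vV)).
have [w inh_u lt_wu] := exists_inhib uN; have /and4P [_ wV ewu _] := inh_u.
have wR : w \in R.
  by apply: contraLR uR => wNR; apply: iter_round_closed wV wNR _ ewu.
have [x0 [L0 [pathL sizeL lastL]]] := IH w wV wR.
exists x0, (L0 ++ [:: g u; g v]); split.
- have val_pos a : val a = pos (pi a) by rewrite pos_pi.
  apply: (dep_path_cat2 pathL); rewrite ?lastL ?g_can //; first by rewrite e_sym.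
  by rewrite !val_pos lastL !g_can lt_wu lt_uv.
- by rewrite size_cat sizeL doubleS addn2.
- by rewrite last_cat /= g_can.
Qed.

Lemma exists_Vstar_survivor r v : v \in iter r round setT ->
  exists2 w, w \in V & w \in iter r round setT.
Proof.
move=> vR; case vV: (v \in V); first by exists v.
have [w /and4P [_ wV ewv _] _] := exists_inhib (negbT vV).
exists w => //; apply: contraLR vR => wNR.
exact: iter_round_closed wV wNR _ ewv.
Qed.

End ParallelGreedy.

Theorem lemma2p1 (T : finType) (e : rel T) (pi : 'I_#|T| -> T) (l : nat) :
  symmetric e -> irreflexive e -> bijective pi ->
  (exists p, dep_path e pi p /\ size p = (2 * l).+1) ->
  (forall p, dep_path e pi p -> size p <= (2 * l).+1) ->
  iter l.+1 (par_round e pi) [set: T] = set0.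
Proof.
move=> e_sym e_irr [g pi_can g_can] _ longest.
apply/setP => v; rewrite in_set0; apply/negP => /(exists_Vstar_survivor e_sym e_irr pi_can g_can).
case=> w wV wR; have [x0 [L0 [pathL sizeL _]]] :=
  surviving_Vstar_dep_path e_sym e_irr pi_can g_can wV wR.
by have := longest _ pathL; rewrite /= sizeL; lia.
Qed.
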